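(* Let $A=\mathbb{F}_2\mathbb{Z}_3$ with calculus as in the context, and $z=1+x$. Then: (a) The central elements of $\Omega^1\otimes_A\Omega^1$ are exactly $\alpha z\,\omega^1\otimes\omega^1+\alpha\,\omega^1\otimes\omega^2+\beta z\,\omega^2\otimes\omega^1+\beta\,\omega^2\otimes\omega^2$ with $\alpha,\beta\in A$ (coefficients acting on the left), and such an element is quantum symmetric if and only if $\alpha=z\beta$, giving $g_\beta:=\beta\big(z^2\omega^1\otimes\omega^1+z\,\omega^1\otimes\omega^2+z\,\omega^2\otimes\omega^1+\omega^2\otimes\omega^2\big)$. (b) For each $\beta\in\{1,z,z^2\}$, $g_\beta$ is an invertible metric admitting exactly four QLCs, exactly one of which is flat. The three non-flat QLCs for a given $\beta$ all have the same curvature, namely: for $\beta=1$, $R_\nabla\omega^1=z^2\mathrm{Vol}\otimes\omega^1+z\mathrm{Vol}\otimes\omega^2$, $R_\nabla\omega^2=\mathrm{Vol}\otimes\omega^1$; for $\beta=z$, $R_\nabla\omega^1=z^2\mathrm{Vol}\otimes\omega^2$, $R_\nabla\omega^2=z\mathrm{Vol}\otimes\omega^1+\mathrm{Vol}\otimes\omega^2$; for $\beta=z^2$, $R_\nabla\omega^i=z\mathrm{Vol}\otimes\omega^i$ ($i=1,2$). (c) The quantum dimension of $g_\beta$ is $1,1,0$ for $\beta=1,z,z^2$ respectively, and for every QLC the Laplacian is independent of the QLC and given (with $\Delta1=0$) by: $\beta=1$: $\Delta z=1$, $\Delta z^2=z$; $\beta=z$: $\Delta z=z^2$, $\Delta z^2=1$;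 $\beta=z^2$: $\Delta=0$.
   Context: Algebra D: $A$ is the commutative algebra over $\mathbb{F}_2$ with basis $1,x,y$ and $x^2=y$, $y^2=x$, $xy=x+y$; with $z=1+x$ one has $z^2=1+y$, $z^3=1$ (so $A\cong\mathbb{F}_2\mathbb{Z}_3$). $\Omega^1$ is the universal calculus, free as a left module on $\omega^1=\mathrm{d}x$, $\omega^2=\mathrm{d}y$, with $\omega^1z=z\omega^1+\omega^2$, $\omega^2z=z^2\omega^1$. $\Omega^2=A\,\mathrm{Vol}$ is free of rank one with central basis $\mathrm{Vol}$ and $\omega^1\wedge\omega^1=\mathrm{Vol}$, $\omega^2\wedge\omega^2=z^2\mathrm{Vol}$, $\omega^1\wedge\omega^2=\omega^2\wedge\omega^1=0$, $\mathrm{d}\omega^i=0$. Definitions: $g\in\Omega^1\otimes_A\Omega^1$ is central if $ag=ga$ for all $a$; quantum symmetric if $\wedge(g)=0$; an invertible metric if there is a bimodule map $(\ ,\ ):\Omega^1\otimes_A\Omega^1\to A$ with $((\eta,\ )\otimes\mathrm{id})g=\eta=(\mathrm{id}\otimes(\ ,\eta))g$ for all $\eta$. A left connection is $\nabla:\Omega^1\to\Omega^1\otimes_A\Omega^1$ with $\nabla(a\omega)=a\nabla\omega+\mathrm{d}a\otimes\omega$; a bimodule connection has in addition a bimodule map $\sigma$ with $\nabla(\omega a)=(\nabla\omega)a+\sigma(\omega\otimes\mathrm{d}a)$. A QLC for $g$ is a bimodule connection that is torsion free ($\wedge\nabla=\mathrm{d}$ on $\Omega^1$) and metric compatible ($(\nabla\otimes\mathrm{id})g+(\sigma\otimes\mathrm{id})(\mathrm{id}\otimes\nabla)g=0$).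 Curvature: $R_\nabla=(\mathrm{d}\otimes\mathrm{id}-\mathrm{id}\wedge\nabla)\nabla:\Omega^1\to\Omega^2\otimes_A\Omega^1$; flat means $R_\nabla=0$. Laplacian $\Delta=(\ ,\ )\nabla\mathrm{d}:A\to A$; quantum dimension $(\ ,\ )(g)$. *)

From Stdlib Require Import Bool List.
Import ListNotations.

(* The algebra A over F_2 with basis 1, x, y; x^2 = y, y^2 = x, xy = x+y. *)
(* An element a0*1 + a1*x + a2*y is recorded by its three F_2 coordinates. *)
Record A := mkA { a0 : bool; a1 : bool; a2 : bool }.

Definition Azero : A := mkA false false false.
Definition Aone  : A := mkA true false false.
Definition Ax    : A := mkA false true false.
Definition Ay    : A := mkA false false true.
Definition Aadd (a b : A) : A := mkA (xorb (a0 a) (a0 b)) (xorb (a1 a) (a1 b)) (xorb (a2 a) (a2 b)).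
(* (a0 + a1 x + a2 y)(b0 + b1 x + b2 y) using x^2 = y, y^2 = x, xy = x + y *)
Definition Amul (a b : A) : A :=
  let c := xorb (a1 a && a2 b) (a2 a && a1 b) in
  mkA (a0 a && a0 b)
      (xorb (xorb (xorb (a0 a && a1 b) (a1 a && a0 b)) (a2 a && a2 b)) c)
      (xorb (xorb (xorb (a0 a && a2 b) (a2 a && a0 b)) (a1 a && a1 b)) c).
Definition Asc (b : bool) : A := mkA b false false.
Definition Az  : A := Aadd Aone Ax.
Definition Az2 : A := Amul Az Az.

(* Omega^1 : free left module on omega^1 = dx, omega^2 = dy.          *)
(* w = o1 w * omega^1 + o2 w * omega^2 (left coefficients).           *)
Record Om1 := mkO1 { o1 : A; o2 : A }.
Definition O1zero : Om1 := mkO1 Azero Azero.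
Definition O1add (u v : Om1) : Om1 := mkO1 (Aadd (o1 u) (o1 v)) (Aadd (o2 u) (o2 v)).
Definition O1lmul (a : A) (u : Om1) : Om1 := mkO1 (Amul a (o1 u)) (Amul a (o2 u)).
Definition e1 : Om1 := mkO1 Aone Azero.
Definition e2 : Om1 := mkO1 Azero Aone.
(* right multiplication by z, from omega^1 z = z omega^1 + omega^2, omega^2 z = z^2 omega^1 *)
Definition O1rz (u : Om1) : Om1 :=
  mkO1 (Aadd (Amul (o1 u) Az) (Amul (o2 u) Az2)) (o1 u).
(* right multiplication by a general a, using x = 1 + z, y = x^2 = 1 + z^2 *)
Definition O1rmul (u : Om1) (a : A) : Om1 :=
  O1add (O1add (if a0 a then u else O1zero)
               (if a1 a then O1add u (O1rz u) else O1zero))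
        (if a2 a then O1add u (O1rz (O1rz u)) else O1zero).
Definition dA (a : A) : Om1 := mkO1 (Asc (a1 a)) (Asc (a2 a)).

(* Omega^1 (x)_A Omega^1 : free left module on omega^i (x) omega^j.    *)
Record T := mkT { t11 : A; t12 : A; t21 : A; t22 : A }.
Definition Tzero : T := mkT Azero Azero Azero Azero.
Definition Tadd (X Y : T) : T :=
  mkT (Aadd (t11 X) (t11 Y)) (Aadd (t12 X) (t12 Y)) (Aadd (t21 X) (t21 Y)) (Aadd (t22 X) (t22 Y)).
Definition Tlmul (a : A) (X : T) : T :=
  mkT (Amul a (t11 X)) (Amul a (t12 X)) (Amul a (t21 X)) (Amul a (t22 X)).
Definition tens (u v : Om1) : T :=
  let p := O1rmul u (o1 v) in let q := O1rmul u (o2 v) in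
  mkT (o1 p) (o1 q) (o2 p) (o2 q).
(* X = col1 X (x) omega^1 + col2 X (x) omega^2 *)
Definition col1 (X : T) : Om1 := mkO1 (t11 X) (t21 X).
Definition col2 (X : T) : Om1 := mkO1 (t12 X) (t22 X).
Definition Trmul (X : T) (a : A) : T :=
  Tadd (tens (col1 X) (O1rmul e1 a)) (tens (col2 X) (O1rmul e2 a)).

(* Omega^2 = A Vol, identified with A (coefficient of Vol).          *)
(* wedge : omega^1^omega^1 = Vol, omega^2^omega^2 = z^2 Vol, others 0 *)
Definition wedge (X : T) : A := Aadd (t11 X) (Amul Az2 (t22 X)).
Definition d1 (w : Om1) : A :=
  Aadd (wedge (tens (dA (o1 w)) e1)) (wedge (tens (dA (o2 w)) e2)).

(* Omega^2 (x)_A Omega^1 : free left module on Vol (x) omega^1, Vol (x) omega^2 *)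
Record V := mkV { v1 : A; v2 : A }.
Definition Vzero : V := mkV Azero Azero.
Definition Vadd (P Q : V) : V := mkV (Aadd (v1 P) (v1 Q)) (Aadd (v2 P) (v2 Q)).
(* (a Vol) (x) eta, Vol central *)
Definition volt (a : A) (eta : Om1) : V := mkV (Amul a (o1 eta)) (Amul a (o2 eta)).

Definition left_connection (nab : Om1 -> T) : Prop :=
  (forall u v, nab (O1add u v) = Tadd (nab u) (nab v)) /\
  (forall a u, nab (O1lmul a u) = Tadd (Tlmul a (nab u)) (tens (dA a) u)).

Definition bimodule_map_T (sigma : T -> T) : Prop :=
  (forall X Y, sigma (Tadd X Y) = Tadd (sigma X) (sigma Y)) /\
  (forall a X, sigma (Tlmul a X) = Tlmul a (sigma X)) /\
  (forall a X, sigma (Trmul X a) = Trmul (sigma X) a).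

Definition bimodule_connection (nab : Om1 -> T) (sigma : T -> T) : Prop :=
  left_connection nab /\ bimodule_map_T sigma /\
  (forall u a, nab (O1rmul u a) = Tadd (Trmul (nab u) a) (sigma (tens u (dA a)))).

Definition torsion_free (nab : Om1 -> T) : Prop :=
  forall u, wedge (nab u) = d1 u.

(* Omega^1 (x) Omega^1 (x) Omega^1 is represented as T * T :
   (P, Q) stands for P (x) omega^1 + Q (x) omega^2. *)
Definition metric_compatible (nab : Om1 -> T) (sigma : T -> T) (g : T) : Prop :=
  (* (nab (x) id) g + (sigma (x) id)(id (x) nab) g = 0, using g = sum_j col_j g (x) omega^j *)
  Tadd (nab (col1 g))
       (Tadd (sigma (tens (col1 g) (col1 (nab e1)))) (sigma (tens (col2 g) (col1 (nab e2)))))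
    = Tzero /\
  Tadd (nab (col2 g))
       (Tadd (sigma (tens (col1 g) (col2 (nab e1)))) (sigma (tens (col2 g) (col2 (nab e2)))))
    = Tzero.

Definition QLC (g : T) (nab : Om1 -> T) (sigma : T -> T) : Prop :=
  bimodule_connection nab sigma /\ torsion_free nab /\ metric_compatible nab sigma g.

(* curvature R = (d (x) id - id ^ nab) nab (characteristic 2: - = +) *)
Definition wedgeL (xi : Om1) (Y : T) : V :=
  Vadd (volt (wedge (tens xi (col1 Y))) e1) (volt (wedge (tens xi (col2 Y))) e2).
Definition curv_op (nab : Om1 -> T) (X : T) : V :=
  Vadd (Vadd (volt (d1 (col1 X)) e1) (wedgeL (col1 X) (nab e1)))
       (Vadd (volt (d1 (col2 X)) e2) (wedgeL (col2 X) (nab e2))).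
Definition curvature (nab : Om1 -> T) (u : Om1) : V := curv_op nab (nab u).
Definition flat (nab : Om1 -> T) : Prop := forall u, curvature nab u = Vzero.

Definition central (g : T) : Prop := forall a, Tlmul a g = Trmul g a.
Definition quantum_symmetric (g : T) : Prop := wedge g = Azero.

Definition inverse_metric (g : T) (pr : T -> A) : Prop :=
  (forall X Y, pr (Tadd X Y) = Aadd (pr X) (pr Y)) /\
  (forall a X, pr (Tlmul a X) = Amul a (pr X)) /\
  (forall a X, pr (Trmul X a) = Amul (pr X) a) /\
  (forall eta,
     (* ((eta, ) (x) id) g = eta *)
     mkO1 (pr (tens eta (col1 g))) (pr (tens eta (col2 g))) = eta /\
     (* (id (x) ( , eta)) g = eta *)
     O1add (O1rmul (col1 g) (pr (tens e1 eta))) (O1rmul (col2 g) (pr (tens e2 eta))) = eta).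

Definition invertible_metric (g : T) : Prop := exists pr, inverse_metric g pr.

Definition quantum_dimension (pr : T -> A) (g : T) : A := pr g.
Definition laplacian (pr : T -> A) (nab : Om1 -> T) (f : A) : A := pr (nab (dA f)).

Definition central_form (alpha beta : A) : T :=
  mkT (Amul alpha Az) alpha (Amul beta Az) beta.
Definition gmet (beta : A) : T :=
  Tlmul beta (mkT Az2 Az Az Aone).

Definition conn_eq (c c' : (Om1 -> T) * (T -> T)) : Prop :=
  (forall u, fst c u = fst c' u) /\ (forall X, snd c X = snd c' X).

Definition exactly {X : Type} (R : X -> X -> Prop) (P : X -> Prop) (n : nat) : Prop :=
  exists l : list X,
    length l = n /\ (forall x, In x l -> P x) /\
    ForallOrdPairs (fun x y => ~ R x y) l /\
    (forall x, P x -> exists y, In y l /\ R x y).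

Definition isQLC (g : T) (c : (Om1 -> T) * (T -> T)) : Prop := QLC g (fst c) (snd c).
Definition isFlatQLC (g : T) (c : (Om1 -> T) * (T -> T)) : Prop :=
  QLC g (fst c) (snd c) /\ flat (fst c).

(* Everything in sight is a finite F_2-vector space, so the proof combines a
   little structure theory with exhaustive computation:
   - a left connection is determined by nabla(omega^1), nabla(omega^2), and in a
     bimodule connection sigma is then forced on the basis omega^i (x) d(x), d(y)
     by the right Leibniz rule ([bimodule_connection_determined]); so every
     bimodule connection is equivalent to [connection_of n] for a pair of tensors
     n = (nabla omega^1, nabla omega^2);
   - torsion freeness forces n into the kernel of the wedge product (8^3 choices
     each), and a search over these 8^6 pairs keeps those that are metric
     compatible ([candidates], [candidates_complete]);
   - each candidate is then checked to satisfy every QLC axiom by enumerating the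
     finite modules ([qlc_check_sound]; bimodule maps need only be tested on a
     basis, [right_linear_on_basis]); flatness, curvature and the Laplacian of
     the candidates are computed in the same way;
   - an inverse metric (,) is left linear, hence determined by its four values on
     the basis, and the inverse identities at omega^1, omega^2 already pin these
     down ([unique_inverse_check_sound]). *)

From Stdlib Require Import Bool List Ring PeanoNat.
Import ListNotations.

Lemma A_semiring : semi_ring_theory Azero Aone Aadd Amul (@eq A).
Proof.
  constructor; intros;
    repeat match goal with a : A |- _ => destruct a as [[] [] []] end; reflexivity.
Qed.
Add Ring A_ring : A_semiring.

Lemma Aadd_cancel (a b : A) : Aadd (Aadd a b) a = b.
Proof. destruct a as [[] [] []], b as [[] [] []]; reflexivity. Qed.

Lemma Aadd_zero_eq (a b : A) : Aadd a b = Azero -> a = b.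
Proof. intro H; rewrite <- (Aadd_cancel a b), H; ring. Qed.

Definition Aeqb (a b : A) : bool :=
  Bool.eqb (a0 a) (a0 b) && Bool.eqb (a1 a) (a1 b) && Bool.eqb (a2 a) (a2 b).

Lemma Aeqb_iff (a b : A) : Aeqb a b = true <-> a = b.
Proof.
  split; [| intros <-; destruct a as [[] [] []]; reflexivity].
  destruct a as [[] [] []], b as [[] [] []]; intro H; first [reflexivity | discriminate].
Qed.

Definition Om1eqb (u v : Om1) : bool := Aeqb (o1 u) (o1 v) && Aeqb (o2 u) (o2 v).

Lemma Om1eqb_iff (u v : Om1) : Om1eqb u v = true <-> u = v.
Proof.
  destruct u, v; unfold Om1eqb; simpl; rewrite andb_true_iff, !Aeqb_iff.
  split; [intros [-> ->]; reflexivity | intro H; injection H; auto].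
Qed.

Definition Teqb (X Y : T) : bool :=
  Aeqb (t11 X) (t11 Y) && Aeqb (t12 X) (t12 Y) && Aeqb (t21 X) (t21 Y) && Aeqb (t22 X) (t22 Y).

Lemma Teqb_iff (X Y : T) : Teqb X Y = true <-> X = Y.
Proof.
  destruct X, Y; unfold Teqb; simpl; rewrite !andb_true_iff, !Aeqb_iff.
  split; [intros [[[-> ->] ->] ->]; reflexivity | intro H; injection H; auto].
Qed.

Definition Veqb (P Q : V) : bool := Aeqb (v1 P) (v1 Q) && Aeqb (v2 P) (v2 Q).

Lemma Veqb_iff (P Q : V) : Veqb P Q = true <-> P = Q.
Proof.
  destruct P, Q; unfold Veqb; simpl; rewrite andb_true_iff, !Aeqb_iff.
  split; [intros [-> ->]; reflexivity | intro H; injection H; auto].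
Qed.

Definition Peqb (n m : T * T) : bool := Teqb (fst n) (fst m) && Teqb (snd n) (snd m).

Lemma Peqb_iff (n m : T * T) : Peqb n m = true <-> n = m.
Proof.
  destruct n, m; unfold Peqb; simpl; rewrite andb_true_iff, !Teqb_iff.
  split; [intros [-> ->]; reflexivity | intro H; injection H; auto].
Qed.

Fixpoint nodupb {X : Type} (eqb : X -> X -> bool) (l : list X) : bool :=
  match l with
  | [] => true
  | x :: l' => negb (existsb (eqb x) l') && nodupb eqb l'
  end.

Lemma nodupb_NoDup {X : Type} (eqb : X -> X -> bool) (l : list X) :
  (forall x y, eqb x y = true <-> x = y) -> nodupb eqb l = true -> NoDup l.
Proof.
  intro Heq; induction l as [| x l IH]; simpl; intro H; constructor.
  - apply andb_true_iff in H as [Hx _]; intro Hin.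
    assert (existsb (eqb x) l = true) as Hex
      by (apply existsb_exists; exists x; split; [exact Hin | apply Heq; reflexivity]).
    rewrite Hex in Hx; discriminate.
  - apply IH; apply andb_true_iff in H as [_ Hl]; exact Hl.
Qed.

Definition bools : list bool := [false; true].
Definition allA : list A :=
  flat_map (fun p => flat_map (fun q => map (mkA p q) bools) bools) bools.
Definition allO : list Om1 := flat_map (fun a => map (mkO1 a) allA) allA.
Definition allT : list T :=
  flat_map (fun a => flat_map (fun b => flat_map (fun c => map (mkT a b c) allA) allA) allA) allA.

Lemma allA_complete (a : A) : In a allA.
Proof. destruct a as [[] [] []]; simpl; tauto. Qed.

Lemma allO_complete (u : Om1) : In u allO.
Proof.
  destruct u as [a b]; apply in_flat_map; exists a; split; [apply allA_complete |].
  apply in_map, allA_complete.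
Qed.

Lemma allT_complete (X : T) : In X allT.
Proof.
  destruct X as [a b c d]; unfold allT.
  apply in_flat_map; exists a; split; [apply allA_complete |].
  apply in_flat_map; exists b; split; [apply allA_complete |].
  apply in_flat_map; exists c; split; [apply allA_complete |].
  apply in_map, allA_complete.
Qed.

Lemma forallb_complete {X : Type} (l : list X) (p : X -> bool) :
  (forall x, In x l) -> forallb p l = true -> forall x, p x = true.
Proof. intros Hl H x; rewrite forallb_forall in H; apply H, Hl. Qed.

Lemma forallb2_complete {X Y : Type} (lx : list X) (ly : list Y) (p : X -> Y -> bool) :
  (forall x, In x lx) -> (forall y, In y ly) ->
  forallb (fun x => forallb (p x) ly) lx = true -> forall x y, p x y = true.
Proof. intros Hx Hy H x; apply (forallb_complete ly (p x) Hy), (forallb_complete lx _ Hx H). Qed.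

Definition E11 : T := mkT Aone Azero Azero Azero.
Definition E12 : T := mkT Azero Aone Azero Azero.
Definition E21 : T := mkT Azero Azero Aone Azero.
Definition E22 : T := mkT Azero Azero Azero Aone.

Definition lin_T (s11 s12 s21 s22 : T) (X : T) : T :=
  Tadd (Tadd (Tlmul (t11 X) s11) (Tlmul (t12 X) s12))
       (Tadd (Tlmul (t21 X) s21) (Tlmul (t22 X) s22)).

Lemma lin_T_add (s11 s12 s21 s22 X Y : T) :
  lin_T s11 s12 s21 s22 (Tadd X Y) = Tadd (lin_T s11 s12 s21 s22 X) (lin_T s11 s12 s21 s22 Y).
Proof. destruct s11, s12, s21, s22, X, Y; unfold lin_T, Tadd, Tlmul; simpl; f_equal; ring. Qed.

Lemma lin_T_lmul (s11 s12 s21 s22 : T) (a : A) (X : T) :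
  lin_T s11 s12 s21 s22 (Tlmul a X) = Tlmul a (lin_T s11 s12 s21 s22 X).
Proof. destruct s11, s12, s21, s22, X; unfold lin_T, Tadd, Tlmul; simpl; f_equal; ring. Qed.

Lemma T_basis_decomposition (X : T) : X = lin_T E11 E12 E21 E22 X.
Proof. destruct X; unfold lin_T, Tadd, Tlmul; simpl; f_equal; ring. Qed.

Lemma left_linear_T_determined (sigma : T -> T) :
  (forall X Y, sigma (Tadd X Y) = Tadd (sigma X) (sigma Y)) ->
  (forall a X, sigma (Tlmul a X) = Tlmul a (sigma X)) ->
  forall X, sigma X = lin_T (sigma E11) (sigma E12) (sigma E21) (sigma E22) X.
Proof.
  intros Hadd Hlin X.
  rewrite (T_basis_decomposition X) at 1; unfold lin_T; rewrite !Hadd, !Hlin; reflexivity.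
Qed.

Lemma O1rmul_lmul (b : A) (u : Om1) (c : A) : O1rmul (O1lmul b u) c = O1lmul b (O1rmul u c).
Proof.
  unfold O1rmul; destruct (a0 c), (a1 c), (a2 c);
    destruct u; unfold O1rz, O1add, O1lmul, O1zero; simpl; f_equal; ring.
Qed.

Lemma O1rmul_add (u v : Om1) (c : A) : O1rmul (O1add u v) c = O1add (O1rmul u c) (O1rmul v c).
Proof.
  unfold O1rmul; destruct (a0 c), (a1 c), (a2 c);
    destruct u, v; unfold O1rz, O1add, O1lmul, O1zero; simpl; f_equal; ring.
Qed.

Lemma tens_lmul (b : A) (u v : Om1) : tens (O1lmul b u) v = Tlmul b (tens u v).
Proof. unfold tens; rewrite !O1rmul_lmul; reflexivity. Qed.

Lemma tens_add (u u' v : Om1) : tens (O1add u u') v = Tadd (tens u v) (tens u' v).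
Proof. unfold tens; rewrite !O1rmul_add; reflexivity. Qed.

Lemma Trmul_lmul (b : A) (X : T) (a : A) : Trmul (Tlmul b X) a = Tlmul b (Trmul X a).
Proof.
  unfold Trmul; change (col1 (Tlmul b X)) with (O1lmul b (col1 X));
    change (col2 (Tlmul b X)) with (O1lmul b (col2 X)); rewrite !tens_lmul.
  destruct (tens (col1 X) _), (tens (col2 X) _); unfold Tadd, Tlmul; simpl; f_equal; ring.
Qed.

Lemma Trmul_add (X Y : T) (a : A) : Trmul (Tadd X Y) a = Tadd (Trmul X a) (Trmul Y a).
Proof.
  unfold Trmul; change (col1 (Tadd X Y)) with (O1add (col1 X) (col1 Y));
    change (col2 (Tadd X Y)) with (O1add (col2 X) (col2 Y)); rewrite !tens_add.
  destruct (tens (col1 X) _), (tens (col2 X) _), (tens (col1 Y) _), (tens (col2 Y) _);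
    unfold Tadd; simpl; f_equal; ring.
Qed.

Lemma Trmul_lin_T (s11 s12 s21 s22 X : T) (a : A) :
  Trmul (lin_T s11 s12 s21 s22 X) a =
  lin_T (Trmul s11 a) (Trmul s12 a) (Trmul s21 a) (Trmul s22 a) X.
Proof. unfold lin_T; rewrite !Trmul_add, !Trmul_lmul; reflexivity. Qed.

Lemma right_linear_on_basis (sigma : T -> T) :
  (forall X Y, sigma (Tadd X Y) = Tadd (sigma X) (sigma Y)) ->
  (forall a X, sigma (Tlmul a X) = Tlmul a (sigma X)) ->
  (forall a, sigma (Trmul E11 a) = Trmul (sigma E11) a /\ sigma (Trmul E12 a) = Trmul (sigma E12) a /\
             sigma (Trmul E21 a) = Trmul (sigma E21) a /\ sigma (Trmul E22 a) = Trmul (sigma E22) a) ->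
  forall a X, sigma (Trmul X a) = Trmul (sigma X) a.
Proof.
  intros Hadd Hlin Hbasis a X.
  rewrite (T_basis_decomposition X) at 1; rewrite Trmul_lin_T.
  rewrite (left_linear_T_determined sigma Hadd Hlin X), Trmul_lin_T.
  unfold lin_T; rewrite !Hadd, !Hlin.
  destruct (Hbasis a) as [-> [-> [-> ->]]]; reflexivity.
Qed.

Definition contract (p X : T) : A :=
  Aadd (Aadd (Amul (t11 X) (t11 p)) (Amul (t12 X) (t12 p)))
       (Aadd (Amul (t21 X) (t21 p)) (Amul (t22 X) (t22 p))).

Lemma contract_add (p X Y : T) : contract p (Tadd X Y) = Aadd (contract p X) (contract p Y).
Proof. destruct X, Y; unfold contract, Tadd; simpl; ring. Qed.

Lemma contract_lmul (p : T) (a : A) (X : T) : contract p (Tlmul a X) = Amul a (contract p X).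
Proof. destruct X; unfold contract, Tlmul; simpl; ring. Qed.

Lemma left_linear_A_determined (pr : T -> A) :
  (forall X Y, pr (Tadd X Y) = Aadd (pr X) (pr Y)) ->
  (forall a X, pr (Tlmul a X) = Amul a (pr X)) ->
  forall X, pr X = contract (mkT (pr E11) (pr E12) (pr E21) (pr E22)) X.
Proof.
  intros Hadd Hlin X.
  rewrite (T_basis_decomposition X) at 1; unfold lin_T; rewrite !Hadd, !Hlin.
  unfold contract; simpl; ring.
Qed.

Lemma functional_right_linear_on_basis (pr : T -> A) :
  (forall X Y, pr (Tadd X Y) = Aadd (pr X) (pr Y)) ->
  (forall a X, pr (Tlmul a X) = Amul a (pr X)) ->
  (forall a, pr (Trmul E11 a) = Amul (pr E11) a /\ pr (Trmul E12 a) = Amul (pr E12) a /\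
             pr (Trmul E21 a) = Amul (pr E21) a /\ pr (Trmul E22 a) = Amul (pr E22) a) ->
  forall a X, pr (Trmul X a) = Amul (pr X) a.
Proof.
  intros Hadd Hlin Hbasis a X.
  rewrite (T_basis_decomposition X) at 1; rewrite Trmul_lin_T.
  rewrite (left_linear_A_determined pr Hadd Hlin X).
  unfold lin_T; rewrite !Hadd, !Hlin.
  destruct (Hbasis a) as [-> [-> [-> ->]]]; unfold contract; simpl; ring.
Qed.

Definition nabla_of (n1 n2 : T) (u : Om1) : T :=
  Tadd (Tadd (Tlmul (o1 u) n1) (Tlmul (o2 u) n2))
       (Tadd (tens (dA (o1 u)) e1) (tens (dA (o2 u)) e2)).

Lemma nabla_of_e1 (n1 n2 : T) : nabla_of n1 n2 e1 = n1.
Proof.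
  destruct n1, n2; unfold nabla_of, Tadd, Tlmul; simpl; change (Asc false) with Azero; f_equal; ring.
Qed.

Lemma nabla_of_e2 (n1 n2 : T) : nabla_of n1 n2 e2 = n2.
Proof.
  destruct n1, n2; unfold nabla_of, Tadd, Tlmul; simpl; change (Asc false) with Azero; f_equal; ring.
Qed.

Lemma Om1_basis_decomposition (u : Om1) : u = O1add (O1lmul (o1 u) e1) (O1lmul (o2 u) e2).
Proof. destruct u; unfold O1add, O1lmul; simpl; f_equal; ring. Qed.

Lemma left_connection_determined (nab : Om1 -> T) :
  left_connection nab -> forall u, nab u = nabla_of (nab e1) (nab e2) u.
Proof.
  intros [Hadd Hleib] u.
  rewrite (Om1_basis_decomposition u) at 1; rewrite Hadd, !Hleib.
  destruct (nab e1), (nab e2); unfold nabla_of, Tadd; simpl; f_equal; ring.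
Qed.

Lemma Tadd_solve (X Y Z : T) : X = Tadd Y Z -> Z = Tadd X Y.
Proof. intros ->; destruct Y, Z; unfold Tadd; simpl; rewrite !Aadd_cancel; reflexivity. Qed.

(* The generalised braiding forced by the right Leibniz rule:
   sigma(omega^i (x) da) = nabla(omega^i a) - (nabla omega^i) a for a = x, y,
   and omega^i (x) dx, omega^i (x) dy is the basis E_i1, E_i2. *)
Definition sigma_of (n1 n2 : T) : T -> T :=
  lin_T (Tadd (nabla_of n1 n2 (O1rmul e1 Ax)) (Trmul n1 Ax))
        (Tadd (nabla_of n1 n2 (O1rmul e1 Ay)) (Trmul n1 Ay))
        (Tadd (nabla_of n1 n2 (O1rmul e2 Ax)) (Trmul n2 Ax))
        (Tadd (nabla_of n1 n2 (O1rmul e2 Ay)) (Trmul n2 Ay)).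

Definition connection_of (n : T * T) : (Om1 -> T) * (T -> T) :=
  (nabla_of (fst n) (snd n), sigma_of (fst n) (snd n)).

Lemma bimodule_connection_determined (nab : Om1 -> T) (sigma : T -> T) :
  bimodule_connection nab sigma -> conn_eq (nab, sigma) (connection_of (nab e1, nab e2)).
Proof.
  intros [Hleft [[Hadd [Hlin _]] Hright]].
  pose proof (left_connection_determined nab Hleft) as Hnab.
  assert (Hbasis : forall u a,
            sigma (tens u (dA a)) = Tadd (nabla_of (nab e1) (nab e2) (O1rmul u a)) (Trmul (nab u) a)).
  { intros u a; apply Tadd_solve; rewrite <- Hnab; apply Hright. }
  split; [exact Hnab |].
  intro X; simpl; rewrite (left_linear_T_determined sigma Hadd Hlin X).
  unfold sigma_of; rewrite <- !Hbasis; reflexivity.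
Qed.

Lemma connection_of_injective (n m : T * T) :
  conn_eq (connection_of n) (connection_of m) -> n = m.
Proof.
  intros [Hnab _]; simpl in Hnab.
  pose proof (Hnab e1) as H1; pose proof (Hnab e2) as H2.
  rewrite !nabla_of_e1 in H1; rewrite !nabla_of_e2 in H2.
  destruct n, m; simpl in *; congruence.
Qed.

Definition wedge_kernel : list T :=
  flat_map (fun b => flat_map (fun c => map (fun d => mkT (Amul Az2 d) b c d) allA) allA) allA.

Lemma wedge_kernel_complete (n : T) : wedge n = Azero -> In n wedge_kernel.
Proof.
  destruct n as [a b c d]; unfold wedge; cbn [t11 t22]; intros ->%Aadd_zero_eq.
  apply in_flat_map; exists b; split; [apply allA_complete |].
  apply in_flat_map; exists c; split; [apply allA_complete |].
  apply in_map_iff; exists d; split; [reflexivity | apply allA_complete].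
Qed.

(* Since d omega^i = 0, torsion freeness puts nabla omega^i in the wedge kernel. *)
Lemma torsion_free_basis (nab : Om1 -> T) :
  torsion_free nab -> In (nab e1) wedge_kernel /\ In (nab e2) wedge_kernel.
Proof. intro Htor; split; apply wedge_kernel_complete; apply Htor. Qed.

(* The two components of the metric compatibility condition for [connection_of (n1, n2)],
   with nabla omega^i replaced by n_i and the two sigma-terms merged by linearity. *)
Definition compatibility_defects (g n1 n2 : T) : T * T :=
  (Tadd (nabla_of n1 n2 (col1 g))
        (sigma_of n1 n2 (Tadd (tens (col1 g) (col1 n1)) (tens (col2 g) (col1 n2)))),
   Tadd (nabla_of n1 n2 (col2 g))
        (sigma_of n1 n2 (Tadd (tens (col1 g) (col2 n1)) (tens (col2 g) (col2 n2))))).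

Lemma metric_compatible_defects (g n1 n2 : T) :
  metric_compatible (nabla_of n1 n2) (sigma_of n1 n2) g ->
  compatibility_defects g n1 n2 = (Tzero, Tzero).
Proof.
  unfold metric_compatible, compatibility_defects, sigma_of.
  rewrite nabla_of_e1, nabla_of_e2, <- !lin_T_add; intros [-> ->]; reflexivity.
Qed.

(* A staged evaluation of the defects for the search over 8^6 pairs: everything
   depending only on g, or on g and one n_i, is computed once. [affine_at u]
   records nabla_of n1 n2 u as the affine function u1 n1 + u2 n2 + k of (n1, n2). *)
Definition affine_at (u : Om1) : A * A * T :=
  (o1 u, o2 u, Tadd (tens (dA (o1 u)) e1) (tens (dA (o2 u)) e2)).
Definition eval_affine (c : A * A * T) (n1 n2 : T) : T :=
  let '(a, b, k) := c in Tadd (Tadd (Tlmul a n1) (Tlmul b n2)) k.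

Record Precomputed := precomputed {
  value : T; value_x : T; value_y : T; g11 : T; g21 : T; g12 : T; g22 : T }.

Definition precompute (g n : T) : Precomputed :=
  precomputed n (Trmul n Ax) (Trmul n Ay)
    (tens (col1 g) (col1 n)) (tens (col2 g) (col1 n))
    (tens (col1 g) (col2 n)) (tens (col2 g) (col2 n)).

Definition compatible_fast (g : T) : Precomputed -> Precomputed -> bool :=
  let c1x := affine_at (O1rmul e1 Ax) in let c1y := affine_at (O1rmul e1 Ay) in
  let c2x := affine_at (O1rmul e2 Ax) in let c2y := affine_at (O1rmul e2 Ay) in
  let cg1 := affine_at (col1 g) in let cg2 := affine_at (col2 g) in
  fun p1 p2 =>
    let n1 := value p1 in let n2 := value p2 in
    let sigma := lin_T (Tadd (eval_affine c1x n1 n2) (value_x p1))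
                       (Tadd (eval_affine c1y n1 n2) (value_y p1))
                       (Tadd (eval_affine c2x n1 n2) (value_x p2))
                       (Tadd (eval_affine c2y n1 n2) (value_y p2)) in
    if Teqb (Tadd (eval_affine cg1 n1 n2) (sigma (Tadd (g11 p1) (g21 p2)))) Tzero
    then Teqb (Tadd (eval_affine cg2 n1 n2) (sigma (Tadd (g12 p1) (g22 p2)))) Tzero
    else false.

Lemma compatible_fast_spec (g n1 n2 : T) :
  compatible_fast g (precompute g n1) (precompute g n2) =
  let '(D1, D2) := compatibility_defects g n1 n2 in
  if Teqb D1 Tzero then Teqb D2 Tzero else false.
Proof. reflexivity. Qed.

Definition candidates (g : T) : list (T * T) :=
  let check := compatible_fast g in
  let P := map (precompute g) wedge_kernel in
  flat_map (fun p1 => map (fun p2 => (value p1, value p2)) (filter (check p1) P)) P.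

Lemma candidates_complete (g : T) (nab : Om1 -> T) (sigma : T -> T) :
  QLC g nab sigma -> In (nab e1, nab e2) (candidates g).
Proof.
  intros [Hbim [Htor Hmc]].
  destruct (torsion_free_basis nab Htor) as [H1 H2].
  pose proof (bimodule_connection_determined nab sigma Hbim) as [Hn Hs].
  assert (Hmc' : metric_compatible (nabla_of (nab e1) (nab e2)) (sigma_of (nab e1) (nab e2)) g).
  { unfold metric_compatible in *; simpl in Hn, Hs; rewrite <- !Hn, <- !Hs; exact Hmc. }
  apply metric_compatible_defects in Hmc'.
  unfold candidates; apply in_flat_map; exists (precompute g (nab e1)); split; [apply in_map, H1 |].
  apply in_map_iff; exists (precompute g (nab e2)); split; [reflexivity |].
  apply filter_In; split; [apply in_map, H2 |].
  rewrite compatible_fast_spec, Hmc'; reflexivity.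
Qed.

(* Additivity and left
   linearity of sigma hold for every n ([lin_T_add], [lin_T_lmul]) and its right
   linearity is tested on the basis; all other axioms are tested on every element
   of the finite modules. *)
Definition qlc_check (g : T) (n : T * T) : bool :=
  let nab := nabla_of (fst n) (snd n) in
  let sigma := sigma_of (fst n) (snd n) in
  forallb (fun u => forallb (fun v => Teqb (nab (O1add u v)) (Tadd (nab u) (nab v))) allO) allO &&
  forallb (fun a => forallb (fun u =>
    Teqb (nab (O1lmul a u)) (Tadd (Tlmul a (nab u)) (tens (dA a) u))) allO) allA &&
  forallb (fun a =>
    Teqb (sigma (Trmul E11 a)) (Trmul (sigma E11) a) && Teqb (sigma (Trmul E12 a)) (Trmul (sigma E12) a) &&
    Teqb (sigma (Trmul E21 a)) (Trmul (sigma E21) a) && Teqb (sigma (Trmul E22 a)) (Trmul (sigma E22) a))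
    allA &&
  forallb (fun u => forallb (fun a =>
    Teqb (nab (O1rmul u a)) (Tadd (Trmul (nab u) a) (sigma (tens u (dA a))))) allA) allO &&
  forallb (fun u => Aeqb (wedge (nab u)) (d1 u)) allO &&
  Teqb (Tadd (nab (col1 g)) (Tadd (sigma (tens (col1 g) (col1 (nab e1))))
                                  (sigma (tens (col2 g) (col1 (nab e2)))))) Tzero &&
  Teqb (Tadd (nab (col2 g)) (Tadd (sigma (tens (col1 g) (col2 (nab e1))))
                                  (sigma (tens (col2 g) (col2 (nab e2)))))) Tzero.

Lemma qlc_check_sound (g : T) (n : T * T) : qlc_check g n = true -> isQLC g (connection_of n).
Proof.
  unfold isQLC, connection_of; cbn [fst snd]; intros Hcheck.
  apply andb_prop in Hcheck as [Hcheck Hmc2]; apply andb_prop in Hcheck as [Hcheck Hmc1].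
  apply andb_prop in Hcheck as [Hcheck Htor]; apply andb_prop in Hcheck as [Hcheck Hrleib].
  apply andb_prop in Hcheck as [Hcheck Hright]; apply andb_prop in Hcheck as [Hadd Hleib].
  repeat split.
  - intros u v; apply Teqb_iff, (forallb2_complete _ _ _ allO_complete allO_complete Hadd).
  - intros a u; apply Teqb_iff, (forallb2_complete _ _ _ allA_complete allO_complete Hleib).
  - intros X Y; apply lin_T_add.
  - intros a X; apply lin_T_lmul.
  - apply right_linear_on_basis; [apply lin_T_add | apply lin_T_lmul |].
    intro a; pose proof (forallb_complete _ _ allA_complete Hright a) as Ha; cbv beta in Ha.
    apply andb_prop in Ha as [Ha H22]; apply andb_prop in Ha as [Ha H21].
    apply andb_prop in Ha as [H11 H12].
    refine (conj _ (conj _ (conj _ _))); apply Teqb_iff; assumption.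
  - intros u a; apply Teqb_iff, (forallb2_complete _ _ _ allO_complete allA_complete Hrleib).
  - intro u; apply Aeqb_iff, (forallb_complete _ _ allO_complete Htor).
  - apply Teqb_iff, Hmc1.
  - apply Teqb_iff, Hmc2.
Qed.

Lemma curvature_ext (nab nab' : Om1 -> T) :
  (forall u, nab u = nab' u) -> forall u, curvature nab u = curvature nab' u.
Proof. intros H u; unfold curvature, curv_op; rewrite !H; reflexivity. Qed.

Definition flat_check (n : T * T) : bool :=
  forallb (fun u => Veqb (curvature (nabla_of (fst n) (snd n)) u) Vzero) allO.

Lemma flat_check_iff (n : T * T) : flat_check n = true <-> flat (nabla_of (fst n) (snd n)).
Proof.
  unfold flat_check; split.
  - intros H u; apply Veqb_iff, (forallb_complete _ _ allO_complete H).
  - intro H; apply forallb_forall; intros u _; rewrite H; reflexivity.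
Qed.

Lemma flat_parameters (nab : Om1 -> T) (sigma : T -> T) (n : T * T) :
  conn_eq (nab, sigma) (connection_of n) -> (flat nab <-> flat_check n = true).
Proof.
  intros [Hn _]; rewrite flat_check_iff.
  split; intros H u; [rewrite <- (curvature_ext _ _ Hn) | rewrite (curvature_ext _ _ Hn)]; apply H.
Qed.

Lemma NoDup_connections (l : list (T * T)) :
  NoDup l -> ForallOrdPairs (fun c d => ~ conn_eq c d) (map connection_of l).
Proof.
  induction 1 as [| n l Hn _ IH]; simpl; constructor; [| exact IH].
  apply Forall_forall; intros c Hc Heq; apply in_map_iff in Hc as [m [<- Hm]].
  apply connection_of_injective in Heq; subst; contradiction.
Qed.

Lemma exactly_of_parameters (P : (Om1 -> T) * (T -> T) -> Prop) (l : list (T * T)) :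
  NoDup l -> (forall n, In n l -> P (connection_of n)) ->
  (forall c, P c -> exists n, In n l /\ conn_eq c (connection_of n)) ->
  exactly conn_eq P (length l).
Proof.
  intros Hnodup Hsound Hcover; exists (map connection_of l); repeat split.
  - apply length_map.
  - intros c Hc; apply in_map_iff in Hc as [n [<- Hn]]; apply Hsound, Hn.
  - apply NoDup_connections, Hnodup.
  - intros c Hc; destruct (Hcover c Hc) as [n [Hn Heq]].
    exists (connection_of n); split; [apply in_map, Hn | exact Heq].
Qed.

Section Classification.
Variable g : T.
Variable L : list (T * T).
Hypothesis L_covers : forall nab sigma, QLC g nab sigma -> In (nab e1, nab e2) L.
Hypothesis L_sound : forallb (qlc_check g) L = true.
Hypothesis L_distinct : nodupb Peqb L = true.

Lemma QLC_parameters (nab : Om1 -> T) (sigma : T -> T) :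
  QLC g nab sigma -> exists n, In n L /\ conn_eq (nab, sigma) (connection_of n).
Proof.
  intro Hqlc; exists (nab e1, nab e2); split; [exact (L_covers nab sigma Hqlc) |].
  apply bimodule_connection_determined, Hqlc.
Qed.

Lemma count_QLC : exactly conn_eq (isQLC g) (length L).
Proof.
  apply exactly_of_parameters.
  - exact (nodupb_NoDup Peqb L Peqb_iff L_distinct).
  - intros n Hn; apply qlc_check_sound; rewrite forallb_forall in L_sound; auto.
  - intros [nab sigma] Hqlc; exact (QLC_parameters nab sigma Hqlc).
Qed.

Lemma count_flat_QLC : exactly conn_eq (isFlatQLC g) (length (filter flat_check L)).
Proof.
  apply exactly_of_parameters.
  - apply NoDup_filter; exact (nodupb_NoDup Peqb L Peqb_iff L_distinct).
  - intros n Hn; apply filter_In in Hn as [Hn Hflat]; split.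
    + apply qlc_check_sound; rewrite forallb_forall in L_sound; auto.
    + apply flat_check_iff, Hflat.
  - intros [nab sigma] [Hqlc Hflat].
    destruct (QLC_parameters nab sigma Hqlc) as [n [Hn Heq]].
    exists n; split; [| exact Heq].
    apply filter_In; split; [exact Hn |]; apply (flat_parameters nab sigma n Heq), Hflat.
Qed.

Lemma nonflat_curvature (R1 R2 : V) :
  forallb (fun n => flat_check n ||
                    (Veqb (curvature (nabla_of (fst n) (snd n)) e1) R1 &&
                     Veqb (curvature (nabla_of (fst n) (snd n)) e2) R2)) L = true ->
  forall nab sigma, QLC g nab sigma -> ~ flat nab ->
  curvature nab e1 = R1 /\ curvature nab e2 = R2.
Proof.
  intros Hcurv nab sigma Hqlc Hnonflat.
  destruct (QLC_parameters nab sigma Hqlc) as [n [Hn Heq]].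
  rewrite forallb_forall in Hcurv; specialize (Hcurv n Hn).
  apply orb_true_iff in Hcurv as [Hflat | Hcurv].
  - exfalso; apply Hnonflat, (flat_parameters nab sigma n Heq), Hflat.
  - apply andb_true_iff in Hcurv as [H1 H2]; apply Veqb_iff in H1, H2.
    destruct Heq as [Hnab _].
    rewrite !(curvature_ext _ _ Hnab); split; assumption.
Qed.

Lemma laplacian_values (p : T) (lap : list (A * A)) :
  forallb (fun n => forallb (fun fv =>
     Aeqb (contract p (nabla_of (fst n) (snd n) (dA (fst fv)))) (snd fv)) lap) L = true ->
  forall pr, (forall X, pr X = contract p X) ->
  forall nab sigma, QLC g nab sigma -> forall f v, In (f, v) lap -> laplacian pr nab f = v.
Proof.
  intros Hlap pr Hpr nab sigma Hqlc f v Hfv.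
  destruct (QLC_parameters nab sigma Hqlc) as [n [Hn [Hnab _]]].
  rewrite forallb_forall in Hlap; specialize (Hlap n Hn); rewrite forallb_forall in Hlap.
  unfold laplacian; rewrite Hpr, Hnab; apply Aeqb_iff, (Hlap (f, v) Hfv).
Qed.
End Classification.

Definition inverse_identities (g p : T) (eta : Om1) : bool :=
  Om1eqb (mkO1 (contract p (tens eta (col1 g))) (contract p (tens eta (col2 g)))) eta &&
  Om1eqb (O1add (O1rmul (col1 g) (contract p (tens e1 eta)))
                (O1rmul (col2 g) (contract p (tens e2 eta)))) eta.

Lemma inverse_identities_iff (g p : T) (eta : Om1) :
  inverse_identities g p eta = true <->
  mkO1 (contract p (tens eta (col1 g))) (contract p (tens eta (col2 g))) = eta /\
  O1add (O1rmul (col1 g) (contract p (tens e1 eta)))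
        (O1rmul (col2 g) (contract p (tens e2 eta))) = eta.
Proof. unfold inverse_identities; rewrite andb_true_iff, !Om1eqb_iff; reflexivity. Qed.

Definition inverse_check (g p : T) : bool :=
  forallb (fun a =>
    Aeqb (contract p (Trmul E11 a)) (Amul (contract p E11) a) &&
    Aeqb (contract p (Trmul E12 a)) (Amul (contract p E12) a) &&
    Aeqb (contract p (Trmul E21 a)) (Amul (contract p E21) a) &&
    Aeqb (contract p (Trmul E22 a)) (Amul (contract p E22) a)) allA &&
  forallb (inverse_identities g p) allO.

Lemma inverse_check_sound (g p : T) : inverse_check g p = true -> inverse_metric g (contract p).
Proof.
  unfold inverse_check; rewrite andb_true_iff; intros [Hright Hid].
  split; [exact (contract_add p) | split; [exact (contract_lmul p) | split]].
  - apply functional_right_linear_on_basis; [exact (contract_add p) | exact (contract_lmul p) |].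
    intro a; pose proof (forallb_complete _ _ allA_complete Hright a) as Ha; cbv beta in Ha.
    apply andb_prop in Ha as [Ha H22]; apply andb_prop in Ha as [Ha H21].
    apply andb_prop in Ha as [H11 H12].
    refine (conj _ (conj _ (conj _ _))); apply Aeqb_iff; assumption.
  - intro eta; apply inverse_identities_iff, (forallb_complete _ _ allO_complete Hid).
Qed.

Definition unique_inverse_check (g p : T) : bool :=
  forallb (fun q => negb (inverse_identities g q e1 && inverse_identities g q e2) || Teqb q p) allT.

Lemma unique_inverse_check_sound (g p : T) :
  unique_inverse_check g p = true ->
  forall pr, inverse_metric g pr -> forall X, pr X = contract p X.
Proof.
  intros Hunique pr [Hadd [Hlin [_ Hid]]].
  pose proof (left_linear_A_determined pr Hadd Hlin) as Hpr.
  set (q := mkT (pr E11) (pr E12) (pr E21) (pr E22)) in Hpr; clearbody q.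
  assert (Hq : forall eta, inverse_identities g q eta = true).
  { intro eta; apply inverse_identities_iff; rewrite <- !Hpr; apply Hid. }
  unfold unique_inverse_check in Hunique.
  pose proof (forallb_complete _ _ allT_complete Hunique q) as Hpq; cbv beta in Hpq.
  rewrite !Hq in Hpq; apply Teqb_iff in Hpq; subst q; exact Hpr.
Qed.

Record qlc_geometry (g : T) (nqlc nflat : nat) (R1 R2 : V) (qdim : A) (lap : list (A * A))
  : Prop := {
  geometry_invertible : invertible_metric g;
  geometry_qlcs : exactly conn_eq (isQLC g) nqlc;
  geometry_flat_qlcs : exactly conn_eq (isFlatQLC g) nflat;
  geometry_curvature : forall nab sigma, QLC g nab sigma -> ~ flat nab ->
    curvature nab e1 = R1 /\ curvature nab e2 = R2;
  geometry_dimension : forall pr, inverse_metric g pr -> quantum_dimension pr g = qdim;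
  geometry_laplacian : forall pr, inverse_metric g pr -> forall nab sigma, QLC g nab sigma ->
    forall f v, In (f, v) lap -> laplacian pr nab f = v }.

Definition geometry_check (g : T) (nqlc nflat : nat) (R1 R2 : V) (p : T) (qdim : A)
    (lap : list (A * A)) : bool :=
  let L := candidates g in
  forallb (qlc_check g) L && nodupb Peqb L && Nat.eqb (length L) nqlc &&
  Nat.eqb (length (filter flat_check L)) nflat &&
  forallb (fun n => flat_check n ||
                    (Veqb (curvature (nabla_of (fst n) (snd n)) e1) R1 &&
                     Veqb (curvature (nabla_of (fst n) (snd n)) e2) R2)) L &&
  inverse_check g p && unique_inverse_check g p && Aeqb (contract p g) qdim &&
  forallb (fun n => forallb (fun fv =>
     Aeqb (contract p (nabla_of (fst n) (snd n) (dA (fst fv)))) (snd fv)) lap) L.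

Lemma geometry_check_sound (g : T) (nqlc nflat : nat) (R1 R2 : V) (p : T) (qdim : A)
    (lap : list (A * A)) :
  geometry_check g nqlc nflat R1 R2 p qdim lap = true -> qlc_geometry g nqlc nflat R1 R2 qdim lap.
Proof.
  unfold geometry_check; rewrite !andb_true_iff, !Nat.eqb_eq.
  intros [[[[[[[[Hsound Hdistinct] <-] <-] Hcurv] Hinv] Hunique] Hqdim] Hlap].
  pose proof (candidates_complete g) as Hcover.
  pose proof (unique_inverse_check_sound g p Hunique) as Hpr.
  constructor.
  - exists (contract p); exact (inverse_check_sound g p Hinv).
  - exact (count_QLC g _ Hcover Hsound Hdistinct).
  - exact (count_flat_QLC g _ Hcover Hsound Hdistinct).
  - exact (nonflat_curvature g _ Hcover R1 R2 Hcurv).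
  - intros pr Hpr'; unfold quantum_dimension; rewrite (Hpr pr Hpr'); apply Aeqb_iff, Hqdim.
  - intros pr Hpr'; exact (laplacian_values g _ Hcover p lap Hlap pr (Hpr pr Hpr')).
Qed.

(* The three metrics g_1, g_z, g_{z^2}; the inverse metric has coefficients
   (,)(omega^i (x) omega^j) given by the tensor passed to [geometry_check_sound]. *)
Lemma geometry_beta_one :
  qlc_geometry (gmet Aone) 4 1 (mkV Az2 Az) (mkV Aone Azero) Aone
    [(Aone, Azero); (Az, Aone); (Az2, Az)].
Proof.
  apply (geometry_check_sound _ _ _ _ _ (mkT Azero Az2 Az2 Aone)).
  vm_cast_no_check (eq_refl true).
Qed.

Lemma geometry_beta_z :
  qlc_geometry (gmet Az) 4 1 (mkV Azero Az2) (mkV Az Aone) Aone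
    [(Aone, Azero); (Az, Az2); (Az2, Aone)].
Proof.
  apply (geometry_check_sound _ _ _ _ _ (mkT Aone Az Az Azero)).
  vm_cast_no_check (eq_refl true).
Qed.

Lemma geometry_beta_z2 :
  qlc_geometry (gmet Az2) 4 1 (mkV Az Azero) (mkV Azero Az) Azero
    (map (fun f => (f, Azero)) allA).
Proof.
  apply (geometry_check_sound _ _ _ _ _ (mkT Az2 Azero Azero Az)).
  vm_cast_no_check (eq_refl true).
Qed.

(* Part (a).  Since A is generated by x and y, centrality only has to be tested
   against these two elements. *)
Definition commutes_with_generators (g : T) : bool :=
  Teqb (Tlmul Ax g) (Trmul g Ax) && Teqb (Tlmul Ay g) (Trmul g Ay).

Lemma central_elements (g : T) : central g <-> exists alpha beta, g = central_form alpha beta.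
Proof.
  assert (Hforms : forallb (fun X => negb (commutes_with_generators X) ||
                                     Teqb X (central_form (t12 X) (t22 X))) allT = true)
    by vm_cast_no_check (eq_refl true).
  assert (Hcentral : forallb (fun alpha => forallb (fun beta => forallb (fun a =>
            Teqb (Tlmul a (central_form alpha beta)) (Trmul (central_form alpha beta) a))
            allA) allA) allA = true)
    by vm_cast_no_check (eq_refl true).
  split.
  - intro Hg; exists (t12 g), (t22 g).
    assert (Hgen : commutes_with_generators g = true)
      by (unfold commutes_with_generators; rewrite (Hg Ax), (Hg Ay), andb_true_iff;
          split; apply Teqb_iff; reflexivity).
    pose proof (forallb_complete _ _ allT_complete Hforms g) as Hg'; cbv beta in Hg'.
    rewrite Hgen in Hg'; apply Teqb_iff, Hg'.
  - intros [alpha [beta ->]] a; apply Teqb_iff.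
    exact (forallb_complete _ _ allA_complete
             (forallb2_complete _ _ _ allA_complete allA_complete Hcentral alpha beta) a).
Qed.

Lemma quantum_symmetric_central_form (alpha beta : A) :
  quantum_symmetric (central_form alpha beta) <-> alpha = Amul Az beta.
Proof.
  assert (Hsym : forallb (fun alpha => forallb (fun beta =>
            Bool.eqb (Aeqb (wedge (central_form alpha beta)) Azero) (Aeqb alpha (Amul Az beta)))
            allA) allA = true)
    by vm_cast_no_check (eq_refl true).
  pose proof (forallb2_complete _ _ _ allA_complete allA_complete Hsym alpha beta) as H.
  unfold quantum_symmetric; rewrite <- Aeqb_iff, <- (Aeqb_iff alpha), (eqb_prop _ _ H).
  reflexivity.
Qed.

Lemma symmetric_central_form (beta : A) : central_form (Amul Az beta) beta = gmet beta.
Proof. destruct beta as [[] [] []]; reflexivity. Qed.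

Theorem mainTheorem5 :
  (* (a) central elements and quantum symmetry *)
  (forall g : T, central g <-> exists alpha beta : A, g = central_form alpha beta) /\
  (forall alpha beta : A,
     quantum_symmetric (central_form alpha beta) <-> alpha = Amul Az beta) /\
  (forall beta : A, central_form (Amul Az beta) beta = gmet beta) /\
  (* (b) for beta in {1, z, z^2}: invertible metric, exactly four QLCs, exactly one flat *)
  (forall beta : A, beta = Aone \/ beta = Az \/ beta = Az2 ->
     invertible_metric (gmet beta) /\
     exactly conn_eq (isQLC (gmet beta)) 4 /\
     exactly conn_eq (isFlatQLC (gmet beta)) 1) /\
  (* (b) curvature of the non-flat QLCs *)
  (forall nab sigma, QLC (gmet Aone) nab sigma -> ~ flat nab ->
     curvature nab e1 = mkV Az2 Az /\ curvature nab e2 = mkV Aone Azero) /\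
  (forall nab sigma, QLC (gmet Az) nab sigma -> ~ flat nab ->
     curvature nab e1 = mkV Azero Az2 /\ curvature nab e2 = mkV Az Aone) /\
  (forall nab sigma, QLC (gmet Az2) nab sigma -> ~ flat nab ->
     curvature nab e1 = mkV Az Azero /\ curvature nab e2 = mkV Azero Az) /\
  (* (c) quantum dimension and Laplacian, for any inverse (,) of g_beta *)
  (forall pr, inverse_metric (gmet Aone) pr ->
     quantum_dimension pr (gmet Aone) = Aone /\
     forall nab sigma, QLC (gmet Aone) nab sigma ->
       laplacian pr nab Aone = Azero /\ laplacian pr nab Az = Aone /\
       laplacian pr nab Az2 = Az) /\
  (forall pr, inverse_metric (gmet Az) pr ->
     quantum_dimension pr (gmet Az) = Aone /\
     forall nab sigma, QLC (gmet Az) nab sigma ->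
       laplacian pr nab Aone = Azero /\ laplacian pr nab Az = Az2 /\
       laplacian pr nab Az2 = Aone) /\
  (forall pr, inverse_metric (gmet Az2) pr ->
     quantum_dimension pr (gmet Az2) = Azero /\
     forall nab sigma, QLC (gmet Az2) nab sigma ->
       forall f : A, laplacian pr nab f = Azero).
Proof.
  destruct geometry_beta_one as [Inv1 Q1 F1 R1 D1 L1].
  destruct geometry_beta_z as [Invz Qz Fz Rz Dz Lz].
  destruct geometry_beta_z2 as [Invz2 Qz2 Fz2 Rz2 Dz2 Lz2].
  split; [exact central_elements |].
  split; [exact quantum_symmetric_central_form |].
  split; [exact symmetric_central_form |].
  split; [intros beta [-> | [-> | ->]]; auto |].
  do 3 (split; [assumption |]).
  split; [intros pr Hpr; split; [auto | intros nab sigma Hqlc] |].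
  { repeat split; apply (L1 pr Hpr nab sigma Hqlc); simpl; auto. }
  split; [intros pr Hpr; split; [auto | intros nab sigma Hqlc] |].
  { repeat split; apply (Lz pr Hpr nab sigma Hqlc); simpl; auto. }
  intros pr Hpr; split; [auto | intros nab sigma Hqlc f].
  apply (Lz2 pr Hpr nab sigma Hqlc), (in_map (fun f => (f, Azero))), allA_complete.
Qed.
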